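(* Let $X_1,\dots,X_N$ ($N\ge2$) be independent random variables with finite means. Let $S=\bigcup_{i=1}^N S_i$ be a set of samples where $S_i$ consists of i.i.d. samples of $X_i$, and let $S$ be randomly divided into two subsets $S^A$ and $S^B$, with $S_i^A=S_i\cap S^A$, $S_i^B=S_i\cap S^B$ nonempty. Define the sample averages $\hat\mu_i=\frac{1}{|S_i|}\sum_{s\in S_i}s$, $\hat\mu_i^A=\frac{1}{|S_i^A|}\sum_{s\in S_i^A}s$, $\hat\mu_i^B=\frac{1}{|S_i^B|}\sum_{s\in S_i^B}s$, and the single estimator $\hat\mu^*_{SE}=\max_i\hat\mu_i$. For $1\le K\le N$, let $\mathcal{M}_K$ be the set of indices of the $K$ largest values in $(\hat\mu^B_1,\dots,\hat\mu^B_N)$, and let $a_K^*$ be an index with $\hat\mu^A_{a_K^*}=\max_{i\in\mathcal{M}_K}\hat\mu^A_i$ (ties broken at random). Let $a^*$ be an index with $\hat\mu^A_{a^*}=\max_i\hat\mu^A_i$, and define the clipped double estimator $\hat\mu^*_{CDE}=\min\{\hat\mu^B_{a^*},\hat\mu^*_{SE}\}$. Assume that the values in $(\hat\mu^A_i)_i$ and in $(\hat\mu^B_i)_i$ are different. Then for $1\le K<N$, $$\mathbb{E}\left[\min\{\hat\mu^B_{a_K^*},\hat\mu^*_{SE}\}\right]\ \ge\ \mathbb{E}\left[\min\{\hat\mu^B_{a_{K+1}^*},\hat\mu^*_{SE}\}\right],$$ where the inequality is strict if and only if $P(\hat\mu^*_{SE}>\hat\mu^B_{a_K^*}>\hat\mu^B_{a_{K+1}^*})>0$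 or $P(\hat\mu^B_{a_K^*}\ge\hat\mu^*_{SE}>\hat\mu^B_{a_{K+1}^*})>0$. Moreover, for all $1\le K\le N$, $\mathbb{E}\left[\min\{\hat\mu^B_{a_K^*},\hat\mu^*_{SE}\}\right]\ge\mathbb{E}\left[\hat\mu^*_{CDE}\right]$.
   Context: The quantity $\min\{\hat\mu^B_{a_K^*},\hat\mu^*_{SE}\}$ is called the action candidate based clipped double estimator of $\max_i\mathbb{E}[X_i]$; $\mathcal{M}_K$ is the set of ''action candidates''. *)

From HB Require Import structures.
From mathcomp Require Import all_boot all_order all_algebra.
From mathcomp Require Import all_classical all_reals all_analysis.
Set Implicit Arguments. Unset Strict Implicit. Unset Printing Implicit Defensive.
Import Order.TTheory GRing.Theory Num.Theory.
Local Open Scope classical_set_scope.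
Local Open Scope ring_scope.

Section defs.
Context {d : measure_display} {T : measurableType d} {R : realType}.

Definition mutually_independent (P : probability T R) (K : eqType)
    (D : set K) (X : K -> T -> R) : Prop :=
  forall (J : seq K) (B : K -> set R),
    uniq J -> (forall k, k \in J -> D k) -> (forall k, measurable (B k)) ->
    P (\bigcap_(k in [set` J]) (X k @^-1` B k)) =
    (\prod_(k <- J) P (X k @^-1` B k))%E.

Definition same_distribution (P : probability T R) (X Y : T -> R) : Prop :=
  forall B : set R, measurable B -> P (X @^-1` B) = P (Y @^-1` B).

End defs.

Definition sample_avg {R : realType} (n : nat) (sel : nat -> bool)
    (y : nat -> R) : R :=
  (\sum_(j < n | sel j) y j) / (#|[set j : 'I_n | sel j]|%:R).

Definition maxR {R : realType} (N : nat) (f : 'I_N -> R) : R :=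
  fine (\big[Order.max/-oo%E]_(i < N) (f i)%:E).

(* M_K : the set of indices of the K largest values of f, i.e. those indices
   i for which fewer than K indices carry a strictly larger value. *)
Definition topK {R : realType} (N : nat) (f : 'I_N -> R) (K : nat) : {set 'I_N} :=
  [set i | (#|[set j | (f i < f j)%R]| < K)%N].

Definition is_argmax_in {R : realType} (N : nat) (M : {set 'I_N}) (g : 'I_N -> R)
    (a : 'I_N) : Prop :=
  a \in M /\ (forall i, i \in M -> g i <= g a).

From HB Require Import structures.
From mathcomp Require Import all_boot all_order all_algebra.
From mathcomp Require Import all_classical all_reals all_analysis.
From mathcomp Require Import measurable_realfun lra.
Import Order.TTheory GRing.Theory Num.Theory.
Local Open Scope classical_set_scope.
Local Open Scope ring_scope.

(* Pointwise, M_K is contained in M_(K+1), and every index outside M_K has a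
   smaller muB than every index inside it (the muB are distinct).  So a_(K+1)
   is either a_K or lies outside M_K; either way muB(a_(K+1)) <= muB(a_K), and
   likewise for a^*, which is a_N because M_N contains every index.  Clipping
   by SE preserves this pointwise inequality, and for integrable f <= g,
   E f < E g iff P(f < g) > 0; the event where the clipped values differ is
   exactly the union of the two events of the statement. *)

Section topK_argmax.
Context {R : realType} {N : nat} {A B : 'I_N -> R}.
Hypotheses (injA : injective A) (injB : injective B).

Lemma topK_subset {K K'} : (K <= K')%N -> topK B K \subset topK B K'.
Proof. by move=> KK'; apply/fintype.subsetP => i; rewrite !inE => /leq_trans; apply. Qed.

(* The inner set in [topK] is a classical set, whose membership unfolds through
   [asbool]. *)
Lemma topK_full : topK B N = [set: 'I_N]%SET.
Proof.
apply/setP => i; rewrite finset.in_setT finset.in_set -[X in (_ < X)%N]card_ord.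
apply/proper_card/properP; split; first exact: subset_predT.
by exists i => //; apply/negP; rewrite unfold_in => /asboolP /=; rewrite ltxx.
Qed.

Lemma lt_notin_topK {K i j} : i \in topK B K -> j \notin topK B K -> B j < B i.
Proof.
rewrite !finset.inE -leqNgt => iK jK; rewrite ltNge; apply/negP => Bij.
have {}Bij : B i < B j.
  by rewrite lt_neqAle Bij andbT; apply: contraTneq iK => /injB ->; rewrite -leqNgt.
have : (#|[set k | (B j < B k)%R]| <= #|[set k | (B i < B k)%R]|)%N.
  apply/subset_leq_card/fintype.subsetP => k; rewrite !unfold_in => /asboolP Bjk.
  by apply/asboolP; exact: lt_trans Bjk.
by move/(leq_trans jK); rewrite leqNgt iK.
Qed.

Lemma argmax_in_unique M a b : is_argmax_in M A a -> is_argmax_in M A b -> a = b.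
Proof. by move=> [aM ha] [bM hb]; apply/injA/eqP; rewrite eq_le hb ?ha. Qed.

Lemma argmax_inE {M a} i : is_argmax_in M A a ->
  (a == i) = (i \in M) && [forall k, (k \notin M) || (A k <= A i)].
Proof.
move=> ha; apply/eqP/andP => [<- | [iM /forallP iA]].
  case: ha => aM ha; split=> //; apply/forallP => k.
  by case: (boolP (k \in M)) => // /ha.
apply: argmax_in_unique ha _; split=> // k kM.
by have := iA k; rewrite kM.
Qed.

Lemma argmax_topK_le {K K' a a'} : (K <= K')%N ->
  is_argmax_in (topK B K) A a -> is_argmax_in (topK B K') A a' -> B a' <= B a.
Proof.
move=> KK' ha [a'K' ha']; have [a'K | a'K] := boolP (a' \in topK B K).
  suff -> : a' = a by [].
  apply: argmax_in_unique ha; split=> // i iK.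
  by apply: ha'; apply: (fintype.subsetP (topK_subset KK')).
by case: ha => aK _; exact/ltW/(lt_notin_topK aK a'K).
Qed.

End topK_argmax.

Lemma lt_min2r_iff (R : realDomainType) (x y s : R) : y <= x ->
  Num.min y s < Num.min x s <-> (x < s /\ y < x) \/ (s <= x /\ y < s).
Proof.
by move=> yx; rewrite !minEle; case: (leP y s) => ?; case: (leP x s) => ?; split; lra.
Qed.

Lemma norm_maxR_le {R : realType} {N} (f : 'I_N -> R) (c : R) : (0 < N)%N ->
  (forall i, `|f i| <= c) -> `|maxR f| <= c.
Proof.
move=> N_gt0 fc; rewrite /maxR (bigmax_eq_arg _ (Ordinal N_gt0)) ?fc // => i _.
exact: leNye.
Qed.

Lemma norm_sample_avg_le {R : realType} n (sel : nat -> bool) (y : nat -> R) :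
  `|sample_avg n sel y| <= \sum_(j < n) `|y j|.
Proof.
rewrite /sample_avg normrM normfV normr_nat.
have sum_le : `|\sum_(j < n | sel j) y j| <= \sum_(j < n) `|y j|.
  apply: le_trans (ler_norm_sum _ _ _) _.
  by rewrite [leRHS](bigID (fun j : 'I_n => sel j)) lerDl sumr_ge0.
case: (posnP #|[set j : 'I_n | sel j]|) => [-> | card_gt0].
  by rewrite invr0 mulr0 (le_trans _ sum_le).
by rewrite ler_pdivrMr ?ltr0n // (le_trans sum_le) // ler_peMr ?sumr_ge0 ?ler1n.
Qed.

Section measurability.
Context {d : measure_display} {T : measurableType d} {R : realType}.

Lemma measurable_set_ltr (f g : T -> R) :
  measurable_fun setT f -> measurable_fun setT g -> measurable [set w | f w < g w].
Proof. by move=> mf mg; rewrite -[X in measurable X]setTI; exact: measurable_fun_ltr. Qed.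

Lemma measurable_set_ler (f g : T -> R) :
  measurable_fun setT f -> measurable_fun setT g -> measurable [set w | f w <= g w].
Proof. by move=> mf mg; rewrite -[X in measurable X]setTI; exact: measurable_fun_ler. Qed.

Lemma measurable_fun_pattern (I : finType) (b : I -> T -> bool)
    (F : (I -> bool) -> bool) :
  (forall i, measurable_fun setT (b i)) -> measurable_fun setT (fun w => F (b ^~ w)).
Proof.
move=> mb; apply: (measurable_fun_bool true); rewrite setTI.
have -> : (fun w => F (b ^~ w)) @^-1` [set true] =
    \bigcup_(c in [set c : {ffun I -> bool} | F c])
      \bigcap_(i in setT) (b i @^-1` [set c i]).
  apply/seteqP; split => w /=.
    move=> Fw; exists [ffun i => b i w] => /=.
      by congr (F _): Fw; apply/funext => i; rewrite ffunE.
    by move=> i _ /=; rewrite ffunE.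
  by move=> [c /= Fc cw]; rewrite (_ : b ^~ w = c) //; apply/funext => i; exact: cw.
apply: fin_bigcup_measurable; first exact: finite_finset.
move=> c _; apply: fin_bigcap_measurable; first exact: finite_finset.
by move=> i _; rewrite -[X in measurable X]setTI; exact: mb.
Qed.

Lemma measurable_fun_index {I : finType} {a : T -> I} {h : I -> T -> R} :
  (forall i, measurable_fun setT (fun w => a w == i)) ->
  (forall i, measurable_fun setT (h i)) -> measurable_fun setT (fun w => h (a w) w).
Proof.
move=> ma mh.
have -> : (fun w => h (a w) w) = (fun w => \sum_i (if a w == i then h i w else 0)).
  apply/funext => w; rewrite (bigD1 (a w)) //= eqxx big1 ?addr0 // => i.
  by rewrite eq_sym => /negPf ->.
by apply: measurable_sum => i; apply: measurable_fun_ifT.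
Qed.

Lemma measurable_mem_topK N (f : 'I_N -> T -> R) K i :
  (forall j, measurable_fun setT (f j)) ->
  measurable_fun setT (fun w => i \in topK (f ^~ w) K).
Proof.
move=> mf; under eq_fun do rewrite finset.inE.
apply: (measurable_fun_pattern _ (fun j w => f i w < f j w)
  (fun c => (#|[set j | c j]| < K)%N)) => j.
exact: measurable_fun_ltr.
Qed.

Lemma measurable_maxR N (h : 'I_N -> T -> R) :
  (forall i, measurable_fun setT (h i)) -> measurable_fun setT (fun w => maxR (h ^~ w)).
Proof.
move=> mh; apply: (measurableT_comp (f := fine)) => //.
elim: (index_enum _) => [|i s IHs].
  by under eq_fun do rewrite big_nil; exact: measurable_cst.
under eq_fun do rewrite big_cons.
by apply: measurable_maxe => //; exact/measurable_EFinP.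
Qed.

Lemma measurable_sample_avg n (sel : nat -> T -> bool) (y : nat -> T -> R) :
  (forall j, measurable_fun setT (sel j)) -> (forall j, measurable_fun setT (y j)) ->
  measurable_fun setT (fun w => sample_avg n (sel ^~ w) (y ^~ w)).
Proof.
move=> msel my.
pose avg (c : {set 'I_n}) w := (\sum_(j in c) y j w) / #|c|%:R.
have -> : (fun w => sample_avg n (sel ^~ w) (y ^~ w)) =
    (fun w => avg [set j : 'I_n | sel j w]%SET w).
  apply/funext => w; rewrite /avg /sample_avg.
  congr (_ / _%:R); first by apply: eq_bigl => j; rewrite finset.inE.
  by apply: eq_card => j; rewrite finset.inE unfold_in asboolb.
apply: measurable_fun_index => c.
  exact: (measurable_fun_pattern _ (fun j : 'I_n => sel j) (fun f => [set j | f j]%SET == c)).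
apply: measurable_funM; last exact: measurable_cst.
rewrite /avg; under eq_fun do rewrite big_mkcond /=.
by apply: measurable_sum => j; case: (j \in c) => //; exact: measurable_cst.
Qed.

End measurability.

Section integrability.
Context {d : measure_display} {T : measurableType d} {R : realType}.
Variable P : probability T R.

Lemma integrable_same_distribution {X Y : {RV P >-> R}} :
  same_distribution P Y X ->
  P.-integrable setT (EFin \o X) -> P.-integrable setT (EFin \o Y).
Proof.
move=> YX /integrableP[_ intX]; apply/integrableP; split; first exact/measurable_EFinP.
have int_distribution (Z : {RV P >-> R}) :
    (\int[P]_x `|(EFin \o Z) x| = \int[distribution P Z]_y `|y|%:E)%E.
  rewrite ge0_integral_distribution //.
  by apply/measurable_EFinP; exact: normr_measurable.
rewrite int_distribution (eq_measure_integral (distribution P X)) -?int_distribution //.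
by move=> A mA _; exact: YX.
Qed.

Lemma integrable_sumr (I : Type) (s : seq I) (h : I -> T -> R) :
  (forall i, P.-integrable setT (EFin \o h i)) ->
  P.-integrable setT (EFin \o (fun w => \sum_(i <- s) h i w)).
Proof.
move=> inth; apply: eq_integrable (integrable_sum _ s (fun i _ => inth i)) => // w _.
by rewrite /= sumEFin.
Qed.

Lemma integrable_normr (f : T -> R) :
  P.-integrable setT (EFin \o f) -> P.-integrable setT (EFin \o (fun w => `|f w|)).
Proof. exact: integrable_abse. Qed.

Definition sample_envelope {N} (n : 'I_N -> nat) (Y : 'I_N -> nat -> T -> R) w :=
  \sum_i \sum_(j < n i) `|Y i j w|.

Lemma norm_sample_avg_le_envelope {N} (n : 'I_N -> nat) (Y : 'I_N -> nat -> T -> R)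
    i (sel : nat -> bool) w :
  `|sample_avg (n i) sel (Y i ^~ w)| <= sample_envelope n Y w.
Proof.
apply: le_trans (norm_sample_avg_le _ _ _) _.
by rewrite /sample_envelope (bigD1 i) //= lerDl sumr_ge0 // => k _; rewrite sumr_ge0.
Qed.

Lemma integrable_sample_envelope {N} (n : 'I_N -> nat) (Y : 'I_N -> nat -> T -> R) :
  (forall i j, (j < n i)%N -> P.-integrable setT (EFin \o Y i j)) ->
  P.-integrable setT (EFin \o sample_envelope n Y).
Proof.
move=> intY; apply: integrable_sumr => i; apply: integrable_sumr => j.
exact/integrable_normr/intY.
Qed.

End integrability.

Section expectation_comparison.
Context {d : measure_display} {T : measurableType d} {R : realType}.
Variable P : probability T R.

Lemma measureU_gt0 (mu : {measure set T -> \bar R}) (A B : set T) :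
  measurable A -> measurable B ->
  (0 < mu (A `|` B))%E <-> (0 < mu A)%E \/ (0 < mu B)%E.
Proof.
move=> mA mB; split => [muAB_gt0 | ].
  rewrite !lt0e !measure_ge0 !andbT; apply/orP; apply: contraTT muAB_gt0.
  rewrite negb_or !negbK => /andP[/eqP muA0 /eqP muB0].
  by rewrite -leNgt -(adde0 0%E) -{1}muA0 -muB0 measureU2.
by case=> /lt_le_trans; apply; apply: le_measure; rewrite ?inE //; exact: measurableU.
Qed.

Lemma expectation_lt_iff (f g : T -> R) :
  P.-integrable setT (EFin \o f) -> P.-integrable setT (EFin \o g) ->
  (forall w, f w <= g w) ->
  ('E_P[f] < 'E_P[g])%E <-> (0 < P [set w | (f w < g w)%R])%E.
Proof.
move=> intf intg fg.
have mf : measurable_fun setT f by apply/measurable_EFinP; case/integrableP: intf.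
have mg : measurable_fun setT g by apply/measurable_EFinP; case/integrableP: intg.
have mgf : measurable_fun setT (EFin \o (fun w => g w - f w)).
  exact/measurable_EFinP/measurable_funB.
have -> : ('E_P[f] < 'E_P[g])%E = (0 < \int[P]_w `|(g w - f w)%:E|)%E.
  rewrite unlock -sube_gt0 -integralB_EFin //.
  by congr (0 < _)%E; apply: eq_integral => w _; rewrite gee0_abs // lee_fin subr_ge0.
have int0_iff : (\int[P]_w `|(g w - f w)%:E| = 0)%E <-> P [set w | f w < g w] = 0.
  rewrite (ae_eq_integral_abs _ _ mgf) // -negligibleP; last exact: measurable_set_ltr.
  suff -> : [set w | f w < g w] = ~` [set w | setT w -> (g w - f w)%:E = cst 0%E w] by [].
  apply/seteqP; split => w /=; rewrite lt_neqAle fg andbT.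
    by move=> fgw /(_ I) /eqP; rewrite eqe subr_eq0 eq_sym (negbTE fgw).
  by move=> fgw; apply/negP => /eqP fgw'; apply: fgw => _; rewrite fgw' subrr.
rewrite !lt0e integral_ge0 ?measure_ge0 // !andbT.
by split => /eqP ne0; apply/eqP => /int0_iff.
Qed.

End expectation_comparison.

Section clipped_estimators.
Context {d : measure_display} {T : measurableType d} {R : realType}.
Context {P : probability T R} {N : nat} {muA muB : 'I_N -> T -> R} {SE G : T -> R}.
Hypotheses (mmuA : forall i, measurable_fun setT (muA i))
  (mmuB : forall i, measurable_fun setT (muB i)) (mSE : measurable_fun setT SE).
Hypotheses (intG : P.-integrable setT (EFin \o G))
  (muB_le : forall i w, `|muB i w| <= G w) (SE_le : forall w, `|SE w| <= G w).
Hypotheses (injA : forall w, injective (muA ^~ w)) (injB : forall w, injective (muB ^~ w)).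

Definition clipped (a : T -> 'I_N) w := Num.min (muB (a w) w) (SE w).

Lemma measurable_argmax_topK {K} {a : T -> 'I_N} :
  (forall w, is_argmax_in (topK (muB ^~ w) K) (muA ^~ w) (a w)) ->
  forall i, measurable_fun setT (fun w => a w == i).
Proof.
move=> ha i.
have -> : (fun w => a w == i) = (fun w => (i \in topK (muB ^~ w) K) &&
    [forall k, (k \notin topK (muB ^~ w) K) || (muA k w <= muA i w)]).
  by apply/funext => w; rewrite (argmax_inE (injA w) _ (ha w)).
apply: measurable_and; first exact: measurable_mem_topK.
apply: (measurable_fun_pattern _
  (fun k w => (k \notin topK (muB ^~ w) K) || (muA k w <= muA i w))
  (fun f => [forall k, f k])) => k.
by apply: measurable_or; [exact/measurable_neg/measurable_mem_topK | exact: measurable_fun_ler].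
Qed.

Lemma integrable_clipped {a : T -> 'I_N} :
  (forall i, measurable_fun setT (fun w => a w == i)) ->
  P.-integrable setT (EFin \o clipped a).
Proof.
move=> ma; apply: (le_integrable _ _ _ intG) => //.
  apply/measurable_EFinP/measurable_minr => //; exact: measurable_fun_index.
move=> w _ /=; rewrite /clipped minEle lee_fin (le_trans _ (ler_norm (G w))) //.
by case: ifP.
Qed.

Lemma clipped_le {K K'} {a a' : T -> 'I_N} : (K <= K')%N ->
  (forall w, is_argmax_in (topK (muB ^~ w) K) (muA ^~ w) (a w)) ->
  (forall w, is_argmax_in (topK (muB ^~ w) K') (muA ^~ w) (a' w)) ->
  forall w, clipped a' w <= clipped a w.
Proof.
move=> KK' ha ha' w; apply: le_min2 => //.
exact: (argmax_topK_le (injA w) (injB w) KK' (ha w) (ha' w)).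
Qed.

Lemma expectation_clipped_le {K K'} {a a' : T -> 'I_N} : (K <= K')%N ->
  (forall w, is_argmax_in (topK (muB ^~ w) K) (muA ^~ w) (a w)) ->
  (forall w, is_argmax_in (topK (muB ^~ w) K') (muA ^~ w) (a' w)) ->
  ('E_P[clipped a'] <= 'E_P[clipped a])%E.
Proof.
move=> KK' ha ha'; rewrite unlock; apply: le_integral => //.
- exact: integrable_clipped (measurable_argmax_topK ha').
- exact: integrable_clipped (measurable_argmax_topK ha).
- by move=> w _; rewrite lee_fin; exact: clipped_le KK' ha ha' w.
Qed.

Lemma expectation_clipped_lt_iff {K} {a a' : T -> 'I_N} :
  (forall w, is_argmax_in (topK (muB ^~ w) K) (muA ^~ w) (a w)) ->
  (forall w, is_argmax_in (topK (muB ^~ w) K.+1) (muA ^~ w) (a' w)) ->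
  ('E_P[clipped a'] < 'E_P[clipped a])%E <->
    (0 < P [set w | (SE w > muB (a w) w)%R /\ (muB (a w) w > muB (a' w) w)%R])%E \/
    (0 < P [set w | (muB (a w) w >= SE w)%R /\ (SE w > muB (a' w) w)%R])%E.
Proof.
move=> ha ha'.
have [ma ma'] := (measurable_argmax_topK ha, measurable_argmax_topK ha').
have [mBa mBa'] := (measurable_fun_index ma mmuB, measurable_fun_index ma' mmuB).
rewrite expectation_lt_iff; last exact: clipped_le (leqnSn K) ha ha'.
2,3: exact: integrable_clipped.
rewrite -measureU_gt0; last 2 first.
- by apply: measurableI; apply: measurable_set_ltr.
- by apply: measurableI; [apply: measurable_set_ler | apply: measurable_set_ltr].
suff -> : [set w | clipped a' w < clipped a w] =
    [set w | (SE w > muB (a w) w)%R /\ (muB (a w) w > muB (a' w) w)%R] `|`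
    [set w | (muB (a w) w >= SE w)%R /\ (SE w > muB (a' w) w)%R] by [].
have Ba'_le w : muB (a' w) w <= muB (a w) w.
  exact (argmax_topK_le (injA w) (injB w) (leqnSn K) (ha w) (ha' w)).
by apply/seteqP; split => w; rewrite /= lt_min2r_iff.
Qed.

End clipped_estimators.

Theorem theorem1 (d : measure_display) (T : measurableType d) (R : realType)
    (P : probability T R) (N : nat) (n : 'I_N -> nat)
    (X : 'I_N -> {RV P >-> R}) (Y : 'I_N -> nat -> {RV P >-> R})
    (inA : 'I_N -> nat -> T -> bool)
    (aK : nat -> T -> 'I_N) (astar : T -> 'I_N) :
  (2 <= N)%N ->
  (* X_1, ..., X_N independent with finite means *)
  mutually_independent P setT (fun i => (X i : T -> R)) ->
  (forall i, P.-integrable setT (EFin \o X i)) ->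
  (* S_i = {Y i j | j < n i} are i.i.d. samples of X_i (all samples independent) *)
  mutually_independent P [set p | (p.2 < n p.1)%N] (fun p => (Y p.1 p.2 : T -> R)) ->
  (forall i j, (j < n i)%N -> same_distribution P (Y i j) (X i)) ->
  (* random division of S into S^A and S^B, with S_i^A, S_i^B nonempty *)
  (forall i j, measurable [set w | inA i j w]) ->
  (forall i w, exists j, (j < n i)%N /\ inA i j w) ->
  (forall i w, exists j, (j < n i)%N /\ ~~ inA i j w) ->
  let mu i w := sample_avg (n i) predT (fun j => Y i j w) in
  let muA i w := sample_avg (n i) (fun j => inA i j w) (fun j => Y i j w) in
  let muB i w := sample_avg (n i) (fun j => ~~ inA i j w) (fun j => Y i j w) in
  let SE w := maxR (fun i => mu i w) in
  (* the values of (muA i)_i, resp. (muB i)_i, are pairwise different *)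
  (forall w, injective (fun i => muA i w)) ->
  (forall w, injective (fun i => muB i w)) ->
  (* a_K^* maximizes muA over M_K, a^* maximizes muA over all indices *)
  (forall K w, (1 <= K <= N)%N ->
     is_argmax_in (topK (fun i => muB i w) K) (fun i => muA i w) (aK K w)) ->
  (forall w, is_argmax_in [set: 'I_N] (fun i => muA i w) (astar w)) ->
  let ACDE K w := Num.min (muB (aK K w) w) (SE w) in
  let CDE w := Num.min (muB (astar w) w) (SE w) in
  (forall K, (1 <= K < N)%N ->
     ('E_P[ACDE K.+1] <= 'E_P[ACDE K])%E /\
     (('E_P[ACDE K.+1] < 'E_P[ACDE K])%E <->
        (0 < P [set w | (SE w > muB (aK K w) w)%R /\ (muB (aK K w) w > muB (aK K.+1 w) w)%R])%E
        \/
        (0 < P [set w | (muB (aK K w) w >= SE w)%R /\ (SE w > muB (aK K.+1 w) w)%R])%E)) /\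
  (forall K, (1 <= K <= N)%N -> ('E_P[CDE] <= 'E_P[ACDE K])%E).
Proof.
move=> N2 _ intX _ sameY mA _ _ mu muA muB SE injA injB haK hastar ACDE CDE.
pose G := sample_envelope n (fun i j => Y i j).
have intG : P.-integrable setT (EFin \o G).
  apply: integrable_sample_envelope => i j /sameY YX.
  exact (integrable_same_distribution P YX (intX i)).
have mA' i j : measurable_fun setT (inA i j).
  by apply: (measurable_fun_bool true); rewrite setTI; exact: mA.
have mmuA i : measurable_fun setT (muA i) by exact: measurable_sample_avg.
have mmuB i : measurable_fun setT (muB i).
  by apply: measurable_sample_avg => // j; exact: measurable_neg.
have mSE : measurable_fun setT SE.
  by apply: measurable_maxR => i; exact: measurable_sample_avg.
have muB_le i w : `|muB i w| <= G w by exact: norm_sample_avg_le_envelope.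
have SE_le w : `|SE w| <= G w.
  by apply: norm_maxR_le (leq_trans _ N2) _ => // i; exact: norm_sample_avg_le_envelope.
have hastarN w : is_argmax_in (topK (muB ^~ w) N) (muA ^~ w) (astar w).
  by rewrite topK_full; exact: hastar.
have E_le := expectation_clipped_le mmuA mmuB mSE intG muB_le SE_le injA injB.
have E_lt_iff := expectation_clipped_lt_iff mmuA mmuB mSE intG muB_le SE_le injA injB.
split => K; last by move=> K_le; exact: E_le (proj2 (andP K_le)) (haK K ^~ K_le) hastarN.
move=> /andP[K_gt0 K_lt]; have K_le : (1 <= K <= N)%N by rewrite K_gt0 ltnW.
have K1_le : (1 <= K.+1 <= N)%N by [].
split; first exact: E_le (leqnSn K) (haK K ^~ K_le) (haK K.+1 ^~ K1_le).
exact: E_lt_iff (haK K ^~ K_le) (haK K.+1 ^~ K1_le).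
Qed.
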